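(* Let $n$ be an odd positive integer, $n_1=\lceil n/2\rceil$, $n_0=\lfloor n/2\rfloor$, and let $k\in K=\mathrm{GL}_2(\mathfrak{o})$. Then (1) $l(k\,a(\varpi^{n_1}))\ge n_1$ if and only if $k\in N(\mathfrak{o})K^0(\mathfrak{p})$; (2) $l(k\,a(\varpi^{n_1}))\le n_0$ if and only if $k\in wK^0(\mathfrak{p})$.
   Context: $F$ is a non-archimedean local field of characteristic $0$ with ring of integers $\mathfrak{o}$, maximal ideal $\mathfrak{p}$, uniformizer $\varpi$, residue field of size $q$, valuation $v$; $U_j=\{x\in\mathfrak{o}^\times: v(x-1)\ge j\}$ ($U_0=\mathfrak o^\times$). $G=\mathrm{GL}_2(F)$, $K=\mathrm{GL}_2(\mathfrak{o})$, $w=\begin{pmatrix}0&1\\-1&0\end{pmatrix}$, $a(y)=\mathrm{diag}(y,1)$, $n(x)=\begin{pmatrix}1&x\\0&1\end{pmatrix}$, $Z$ the center, $N=\{n(x):x\in F\}$, $N(\mathfrak o)=\{n(x):x\in\mathfrak o\}$, $K_1(\mathfrak{p}^n)=K\cap\begin{pmatrix}1+\mathfrak{p}^n&\mathfrak{o}\\\mathfrak{p}^n&\mathfrak{o}\end{pmatrix}$, $K^0(\mathfrak{p})=K\cap\begin{pmatrix}\mathfrak{o}&\mathfrak{p}\\\mathfrak{o}&\mathfrak{o}\end{pmatrix}$. There is a disjoint decomposition $G=\bigsqcup_{t\in\mathbb{Z}}\bigsqcup_{0\le l\le n}\bigsqcup_{v\in\mathfrak{o}^\times/U_{\min(l,n-l)}}ZN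 a(\varpi^t)wn(\varpi^{-l}v)K_1(\mathfrak{p}^n)$; for $g\in G$, $t(g)$ and $l(g)$ denote the unique integers with $0\le l(g)\le n$ and $g\in ZNa(\varpi^{t(g)})wn(\varpi^{-l(g)}v)K_1(\mathfrak{p}^n)$ for some $v\in\mathfrak{o}^\times$. *)

From HB Require Import structures.
From mathcomp Require Import all_boot all_order all_algebra.
Set Implicit Arguments. Unset Strict Implicit. Unset Printing Implicit Defensive.
Import Order.TTheory GRing.Theory Num.Theory.
Local Open Scope ring_scope.

Section LocalField.
Variables (F : fieldType) (v : F -> int) (pi : F).

(* x lies in p^j (j : int); 0 lies in every p^j. *)
Definition inP (j : int) (x : F) : bool := (x == 0) || (j <= v x).
Definition inO (x : F) : bool := inP 0 x.
Definition isUnitO (x : F) : bool := (x != 0) && (v x == 0).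
Definition inU (j : nat) (x : F) : bool := isUnitO x && inP j%:Z (x - 1).

(* v is a discrete valuation on F^x (its value at 0 is irrelevant),
   pi is a uniformizer. *)
Definition is_discrete_valuation : Prop :=
  [/\ forall x y, x != 0 -> y != 0 -> v (x * y) = v x + v y,
      forall x y, x != 0 -> y != 0 -> x + y != 0 -> Num.min (v x) (v y) <= v (x + y),
      pi != 0 & v pi = 1].

Definition complete_v : Prop :=
  forall u : nat -> F,
    (forall m : int, exists N, forall i j, (N <= i)%N -> (N <= j)%N -> inP m (u i - u j)) ->
    exists L, forall m : int, exists N, forall i, (N <= i)%N -> inP m (u i - L).

Definition finite_residue : Prop :=
  exists s : seq F, all inO s /\
    forall x, inO x -> exists2 r, r \in s & inP 1 (x - r).

Definition nonarch_local_field_char0 : Prop :=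
  [/\ is_discrete_valuation, complete_v, finite_residue & [pchar F] =i pred0].

Definition mx2 (a b c d : F) : 'M[F]_2 :=
  \matrix_(i < 2, j < 2)
    if (i == 0 :> nat) then (if (j == 0 :> nat) then a else b)
    else (if (j == 0 :> nat) then c else d).

Definition e00 (A : 'M[F]_2) := A ord0 ord0.
Definition e01 (A : 'M[F]_2) := A ord0 ord_max.
Definition e10 (A : 'M[F]_2) := A ord_max ord0.
Definition e11 (A : 'M[F]_2) := A ord_max ord_max.

Definition wmx : 'M[F]_2 := mx2 0 1 (-1) 0.
Definition amx (y : F) : 'M[F]_2 := mx2 y 0 0 1.
Definition nmx (x : F) : 'M[F]_2 := mx2 1 x 0 1.

Definition inK (A : 'M[F]_2) : Prop :=
  [/\ inO (e00 A), inO (e01 A), inO (e10 A), inO (e11 A) & isUnitO (\det A)].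

Definition inK1 (n : nat) (A : 'M[F]_2) : Prop :=
  inK A /\ inP n%:Z (e00 A - 1) /\ inP n%:Z (e10 A).

Definition inK0p (A : 'M[F]_2) : Prop := inK A /\ inP 1 (e01 A).

Definition in_cell (n : nat) (t : int) (l : nat) (g : 'M[F]_2) : Prop :=
  exists (z x u : F) (k : 'M[F]_2),
    [/\ z != 0, isUnitO u, inK1 n k &
        g = z%:M *m nmx x *m amx (pi ^ t) *m wmx *m nmx (pi ^- l * u) *m k].

Definition has_l (n : nat) (g : 'M[F]_2) (l : nat) : Prop :=
  (l <= n)%N /\ exists t : int, in_cell n t l g.

Definition in_NoK0p (k : 'M[F]_2) : Prop :=
  exists x k0, [/\ inO x, inK0p k0 & k = nmx x *m k0].
Definition in_wK0p (k : 'M[F]_2) : Prop :=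
  exists k0, inK0p k0 /\ k = wmx *m k0.

End LocalField.

(* Let g = k a(pi^n1) have bottom row (C, D) = (k21 pi^n1, k22).  If
   g = z n(x) a(pi^t) w n(pi^-l u) k1 with k1 = [[a, b], [c, d]] in K1(p^n), then
   (C, D) adj(k1) = -z det(k1) (1, pi^-l u), so l = v(Dc - Cd) - v(Da - Cb).
   If k22 is a unit, Da - Cb is a unit and Dc - Cd lies in p^n1, so l >= n1.
   If k22 lies in p, then k21 is a unit, v(Dc - Cd) = n1 and Da - Cb lies in p,
   so l < n1.  Moreover k lies in N(o)K^0(p) iff k22 is a unit, and in wK^0(p)
   iff k22 lies in p; for odd n, n1 = n0 + 1.  That some l exists is an explicit
   decomposition, split into three cases by the size of v(C) - v(D). *)

From HB Require Import structures.
From mathcomp Require Import all_boot all_order all_algebra.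
From mathcomp Require Import ring zify.
Import Order.TTheory GRing.Theory Num.Theory.
Set Implicit Arguments. Unset Strict Implicit. Unset Printing Implicit Defensive.
Local Open Scope ring_scope.

Section Matrix2.
Variable F : fieldType.
Implicit Types (a b c d z x y s : F) (A : 'M[F]_2).

Lemma e00_mx2 a b c d : e00 (mx2 a b c d) = a. Proof. by rewrite /e00 mxE. Qed.
Lemma e01_mx2 a b c d : e01 (mx2 a b c d) = b. Proof. by rewrite /e01 mxE. Qed.
Lemma e10_mx2 a b c d : e10 (mx2 a b c d) = c. Proof. by rewrite /e10 mxE. Qed.
Lemma e11_mx2 a b c d : e11 (mx2 a b c d) = d. Proof. by rewrite /e11 mxE. Qed.
Definition entry_mx2E := (e00_mx2, e01_mx2, e10_mx2, e11_mx2).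

Lemma mx2_eta A : A = mx2 (e00 A) (e01 A) (e10 A) (e11 A).
Proof.
apply/matrixP => i j; rewrite mxE /e00 /e01 /e10 /e11.
by case: i => [[|[|i]] Hi] //; case: j => [[|[|j]] Hj] //=; congr (A _ _); apply: val_inj.
Qed.

Lemma mul_mx2 a b c d a' b' c' d' :
  mx2 a b c d *m mx2 a' b' c' d' =
  mx2 (a * a' + b * c') (a * b' + b * d') (c * a' + d * c') (c * b' + d * d').
Proof.
apply/matrixP => i j; rewrite !mxE !big_ord_recl big_ord0 !mxE /=.
by case: i => [[|[|i]] Hi] //; case: j => [[|[|j]] Hj] //=; rewrite addr0.
Qed.

Lemma scalar_mx2 z : z%:M = mx2 z 0 0 z.
Proof.
by apply/matrixP => i j; rewrite !mxE; case: i => [[|[|i]] Hi] //; case: j => [[|[|j]] Hj].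
Qed.

Lemma det_mx2 a b c d : \det (mx2 a b c d) = a * d - b * c.
Proof.
rewrite (expand_det_row _ ord0) !big_ord_recl big_ord0 /cofactor !det_mx11 !mxE /= /bump /=.
by rewrite expr0 expr1 !mul1r addr0 mulN1r mulrN.
Qed.

Lemma det2E A : \det A = e00 A * e11 A - e01 A * e10 A.
Proof. by rewrite {1}(mx2_eta A) det_mx2. Qed.

Lemma mul_amx A y : A *m amx y = mx2 (e00 A * y) (e01 A) (e10 A * y) (e11 A).
Proof. by rewrite {1}(mx2_eta A) /amx mul_mx2; congr mx2; ring. Qed.

Lemma cell_mxE z x y s a b c d :
  z%:M *m nmx x *m amx y *m wmx F *m nmx s *m mx2 a b c d =
  mx2 (z * (- x * a + (y - x * s) * c)) (z * (- x * b + (y - x * s) * d))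
      (z * (- a - s * c)) (z * (- b - s * d)).
Proof. rewrite scalar_mx2 /nmx /amx /wmx !mul_mx2; congr mx2; ring. Qed.

End Matrix2.

Section Valuation.
Variables (F : fieldType) (v : F -> int) (pi : F).
Hypothesis hv : is_discrete_valuation v pi.
Implicit Types (x y : F) (i j : int).

Lemma vM x y : x != 0 -> y != 0 -> v (x * y) = v x + v y.
Proof. by case: hv => H _ _ _; apply: H. Qed.

Lemma pi_neq0 : pi != 0. Proof. by case: hv. Qed.

Lemma v_pi : v pi = 1. Proof. by case: hv. Qed.

Lemma v_ultra x y : x != 0 -> y != 0 -> x + y != 0 ->
  (v x <= v (x + y)) || (v y <= v (x + y)).
Proof. by case: hv => _ H _ _ hx hy hxy; rewrite -ge_min; apply: H. Qed.

Lemma v1 : v 1 = 0.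
Proof. by have h1 : (1 : F) != 0 := oner_neq0 F; have := vM h1 h1; rewrite mulr1; lia. Qed.

Lemma vN x : x != 0 -> v (- x) = v x.
Proof.
have hN1 : (-1 : F) != 0 by rewrite oppr_eq0 oner_neq0.
have vN1 : v (-1) = 0 by have := vM hN1 hN1; rewrite mulrNN mulr1 v1; lia.
by move=> hx; rewrite -mulN1r vM // vN1 add0r.
Qed.

Lemma vV x : x != 0 -> v x^-1 = - v x.
Proof. by move=> hx; have := vM hx (invr_neq0 hx); rewrite mulfV // v1; lia. Qed.

Lemma v_piX (m : nat) : v (pi ^+ m) = m%:Z.
Proof.
elim: m => [|m IH]; first by rewrite expr0 v1.
by rewrite exprS vM ?expf_neq0 ?pi_neq0 // v_pi IH; lia.
Qed.

Lemma v_piXz (t : int) : v (pi ^ t) = t.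
Proof.
case: t => m /=; first exact: v_piX.
by rewrite vV ?expf_neq0 ?pi_neq0 // v_piX NegzE; lia.
Qed.

Lemma piXz_neq0 (t : int) : pi ^ t != 0.
Proof. exact/expfz_neq0/pi_neq0. Qed.

Lemma vD_dominant j x y : x != 0 -> inP v j y -> v x < j ->
  x + y != 0 /\ v (x + y) = v x.
Proof.
move=> hx; case: (eqVneq y 0) => [-> _ _|hy]; first by rewrite addr0.
rewrite /inP (negbTE hy) /= => hyj hxj.
have hxy : x + y != 0.
  by apply: contraTneq hxj => /eqP; rewrite addr_eq0 => /eqP ->; rewrite vN // -leNgt.
split=> //; have hNy : - y != 0 by rewrite oppr_eq0.
have := v_ultra hxy hNy; rewrite addrK vN // => /(_ hx) h1.
by have := v_ultra hx hy hxy; move: h1 => /orP [] h1 /orP [] h2; lia.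
Qed.

Lemma inP0 j : inP v j 0. Proof. by rewrite /inP eqxx. Qed.

Lemma inPE j x : x != 0 -> inP v j x = (j <= v x).
Proof. by move=> hx; rewrite /inP (negbTE hx). Qed.

Lemma inP_le i j x : i <= j -> inP v j x -> inP v i x.
Proof.
case: (eqVneq x 0) => [-> *|hx]; first exact: inP0.
by rewrite !inPE // => h1 h2; lia.
Qed.

Lemma inPN j x : inP v j x -> inP v j (- x).
Proof. by rewrite /inP oppr_eq0; case: (eqVneq x 0) => //= hx; rewrite vN. Qed.

Lemma inPD j x y : inP v j x -> inP v j y -> inP v j (x + y).
Proof.
case: (eqVneq x 0) => [->|hx]; first by rewrite add0r.
case: (eqVneq y 0) => [->|hy]; first by rewrite addr0.
case: (eqVneq (x + y) 0) => [-> *|hxy]; first exact: inP0.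
by rewrite !inPE // => h1 h2; move: (v_ultra hx hy hxy) => /orP [] h; lia.
Qed.

Lemma inPB j x y : inP v j x -> inP v j y -> inP v j (x - y).
Proof. by move=> hx hy; apply/inPD/inPN. Qed.

Lemma inPM i k j x y : inP v i x -> inP v k y -> j <= i + k -> inP v j (x * y).
Proof.
case: (eqVneq x 0) => [-> *|hx]; first by rewrite mul0r inP0.
case: (eqVneq y 0) => [-> *|hy]; first by rewrite mulr0 inP0.
by rewrite !inPE ?mulf_neq0 // vM // => h1 h2 h3; lia.
Qed.

Lemma inP_piX (m : nat) : inP v m%:Z (pi ^+ m).
Proof. by rewrite inPE ?expf_neq0 ?pi_neq0 // v_piX. Qed.

Lemma isUnitOE x : x != 0 -> isUnitO v x = (v x == 0).
Proof. by move=> hx; rewrite /isUnitO hx. Qed.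

Lemma unit_inO x : isUnitO v x -> inO v x.
Proof. by case/andP => hx /eqP h; rewrite /inO inPE // h. Qed.

Lemma unit_notin_p x : isUnitO v x -> ~~ inP v 1 x.
Proof. by case/andP => hx /eqP h; rewrite inPE // h. Qed.

Lemma inO_unit_or_p x : inO v x -> isUnitO v x || inP v 1 x.
Proof.
rewrite /inO; case: (eqVneq x 0) => [-> _|hx]; first by rewrite inP0 orbT.
by rewrite isUnitOE // !inPE // => h; apply/orP; case: (eqVneq (v x) 0) => h'; [left|right; lia].
Qed.

Lemma unit1 : isUnitO v 1. Proof. by rewrite isUnitOE ?oner_neq0 // v1. Qed.

Lemma unitM x y : isUnitO v x -> isUnitO v y -> isUnitO v (x * y).
Proof.
case/andP => hx /eqP h1 /andP [hy /eqP h2].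
by rewrite isUnitOE ?mulf_neq0 // vM // h1 h2.
Qed.

Lemma unitV x : isUnitO v x -> isUnitO v x^-1.
Proof. by case/andP => hx /eqP h; rewrite isUnitOE ?invr_eq0 // vV // h. Qed.

Lemma unitDp x y : isUnitO v x -> inP v 1 y -> isUnitO v (x + y).
Proof.
case/andP => hx /eqP h hy.
have hx1 : v x < 1 by rewrite h.
have [hxy hv_xy] := vD_dominant hx hy hx1.
by rewrite isUnitOE // hv_xy h.
Qed.

Lemma inOM x y : inO v x -> inO v y -> inO v (x * y).
Proof. by move=> hx hy; apply: inPM hx hy _. Qed.

Definition unit_part x := x / pi ^ v x.

Lemma unit_part_unit x : x != 0 -> isUnitO v (unit_part x).
Proof.
move=> hx; have hp := piXz_neq0 (v x).
by rewrite isUnitOE ?mulf_neq0 ?invr_eq0 // vM ?invr_eq0 // vV // v_piXz; lia.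
Qed.

Implicit Types (a b c d : F) (k : 'M[F]_2).

Lemma unit_det_diag a b c d : inO v a -> inO v d -> inP v 1 (b * c) ->
  isUnitO v (a * d - b * c) -> isUnitO v a && isUnitO v d.
Proof.
move=> ha hd hbc hdet.
have : isUnitO v (a * d) by rewrite -(subrK (b * c) (a * d)); apply: unitDp.
case/andP; rewrite mulf_eq0 negb_or => /andP [ha0 hd0] /eqP.
move: ha hd; rewrite /inO !inPE // vM // !isUnitOE // => ha hd hvad.
by apply/andP; split; apply/eqP; lia.
Qed.

Lemma unit_det_offdiag a b c d : inO v a -> inO v b -> inO v c -> inP v 1 d ->
  isUnitO v (a * d - b * c) -> isUnitO v c.
Proof.
move=> ha hb hc hd hdet; case/orP: (inO_unit_or_p hc) => // hc1.
have had : inP v 1 (a * d) by apply: inPM ha hd _.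
have hbc : inP v 1 (b * c) by apply: inPM hb hc1 _.
by move: (unit_notin_p hdet); rewrite (inPB had hbc).
Qed.

Lemma in_NoK0p_iff k : inK v k -> in_NoK0p v k <-> isUnitO v (e11 k).
Proof.
move=> hk; split.
- case=> x [k0 [hx [[ha hb hc hd hdet] hb0] ->]].
  rewrite (mx2_eta k0) /nmx mul_mx2 !entry_mx2E mul0r add0r mul1r.
  rewrite det2E in hdet.
  by case/andP: (unit_det_diag ha hd (inPM hb0 hc (lexx _)) hdet).
- move=> hd; have hd0 : e11 k != 0 by case/andP: hd.
  have hdV : inO v (e11 k)^-1 by apply/unit_inO/unitV.
  case: (hk) => ha hb hc _ hdet.
  exists (e01 k / e11 k), (mx2 (e00 k - e01 k * e10 k / e11 k) 0 (e10 k) (e11 k)).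
  split.
  + exact: inOM.
  + split; last by rewrite entry_mx2E inP0.
    split; rewrite ?entry_mx2E //.
    * by apply: inPB => //; apply: inOM => //; apply: inOM.
    * exact: inP0.
    * exact: unit_inO.
    * by rewrite det_mx2 mul0r subr0 mulrBl divfK // -det2E.
  + by rewrite {1}(mx2_eta k) /nmx mul_mx2; congr mx2; field.
Qed.

Lemma in_wK0p_iff k : inK v k -> in_wK0p v k <-> inP v 1 (e11 k).
Proof.
move=> hk; split.
- case=> k0 [[_ hb0] ->].
  by rewrite (mx2_eta k0) /wmx mul_mx2 !entry_mx2E mul0r addr0 mulN1r; apply: inPN.
- move=> hd; case: (hk) => ha hb hc hd0 hdet.
  exists (mx2 (- e10 k) (- e11 k) (e00 k) (e01 k)); split.
  + split; last by rewrite entry_mx2E; apply: inPN.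
    split; rewrite ?entry_mx2E //; try exact: inPN.
    by rewrite det_mx2 (_ : _ - _ = \det k) // det2E; ring.
  + by rewrite {1}(mx2_eta k) /wmx mul_mx2; congr mx2; ring.
Qed.

Lemma inK1_entries n k1 : (0 < n)%N -> inK1 v n k1 ->
  [/\ isUnitO v (e00 k1), inO v (e01 k1), inP v n%:Z (e10 k1) & isUnitO v (e11 k1)].
Proof.
move=> hn [[ha hb hc hd hdet] [_ hcn]].
have hbc : inP v 1 (e01 k1 * e10 k1).
  by apply: inPM hb (inP_le _ hcn) _; rewrite ?lez_nat.
rewrite det2E in hdet; case/andP: (unit_det_diag ha hd hbc hdet) => hau hdu.
by split.
Qed.

Lemma in_cell_bottom_row n t l g : in_cell v pi n t l g ->
  exists k1, [/\ inK1 v n k1, e11 g * e10 k1 - e10 g * e11 k1 != 0,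
    e11 g * e00 k1 - e10 g * e01 k1 != 0 &
    v (e11 g * e10 k1 - e10 g * e11 k1) - v (e11 g * e00 k1 - e10 g * e01 k1) = l%:Z].
Proof.
case=> z [x [u [k1 [hz /andP [hu0 /eqP hvu] hk1 ->]]]]; exists k1.
have [[_ _ _ _ /andP [hdet0 /eqP hvdet]] _] := hk1.
set s := pi ^- l * u.
have hpl : pi ^+ l != 0 by rewrite expf_neq0 ?pi_neq0.
have hpl' : pi ^- l != 0 by rewrite invr_eq0.
have hs0 : s != 0 by rewrite mulf_neq0.
have hvs : v s = - l%:Z by rewrite vM ?invr_eq0 // vV // v_piX hvu addr0.
have := cell_mxE z x (pi ^ t) s (e00 k1) (e01 k1) (e10 k1) (e11 k1).
rewrite -mx2_eta => ->; rewrite !entry_mx2E.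
have -> : z * (- e01 k1 - s * e11 k1) * e10 k1 - z * (- e00 k1 - s * e10 k1) * e11 k1
          = z * \det k1 by rewrite det2E; ring.
have -> : z * (- e01 k1 - s * e11 k1) * e00 k1 - z * (- e00 k1 - s * e10 k1) * e01 k1
          = - (z * s * \det k1) by rewrite det2E; ring.
have hzs : z * s != 0 by rewrite mulf_neq0.
split; rewrite ?oppr_eq0 ?mulf_neq0 //.
by rewrite vN ?mulf_neq0 // (vM hzs hdet0) (vM hz hs0) (vM hz hdet0) hvs hvdet; lia.
Qed.

Lemma cell_level_ge n m k t l : (0 < m <= n)%N -> inK v k -> isUnitO v (e11 k) ->
  in_cell v pi n t l (k *m amx (pi ^+ m)) -> (m <= l)%N.
Proof.
move=> /andP [hm hmn] hk hD /in_cell_bottom_row [k1 [hk1]].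
rewrite mul_amx !entry_mx2E.
have [ha hb hc hd] := inK1_entries (leq_trans hm hmn) hk1.
have [_ _ hC _ _] := hk.
have hCm : inP v m%:Z (e10 k * pi ^+ m) by apply: inPM hC (inP_piX m) _; rewrite add0r.
have hX : inP v m%:Z (e11 k * e10 k1 - e10 k * pi ^+ m * e11 k1).
  apply: inPB; last by apply: inPM hCm (unit_inO hd) _; rewrite addr0.
  by apply: inPM (unit_inO hD) hc _; rewrite add0r lez_nat.
have hY : isUnitO v (e11 k * e00 k1 - e10 k * pi ^+ m * e01 k1).
  by apply: unitDp (unitM hD ha) (inPN _); apply: inPM hCm hb _; rewrite addr0 lez_nat.
move=> hX0 _; case/andP: hY => _ /eqP ->.
by rewrite inPE // in hX; lia.
Qed.

Lemma cell_level_lt n m k t l : (0 < m <= n)%N -> inK v k -> inP v 1 (e11 k) ->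
  in_cell v pi n t l (k *m amx (pi ^+ m)) -> (l < m)%N.
Proof.
move=> /andP [hm hmn] hk hD /in_cell_bottom_row [k1 [hk1]].
rewrite mul_amx !entry_mx2E.
have [ha hb hc hd] := inK1_entries (leq_trans hm hmn) hk1.
have [hak hbk hCk _ hdet] := hk.
have /andP [hCk0 /eqP hvCk] : isUnitO v (e10 k).
  by apply: unit_det_offdiag hak hbk hCk hD _; rewrite -det2E.
have /andP [hd0 /eqP hvd] := hd.
have hpm : pi ^+ m != 0 by rewrite expf_neq0 ?pi_neq0.
have hCpm : e10 k * pi ^+ m != 0 by rewrite mulf_neq0.
have hCd0 : - (e10 k * pi ^+ m * e11 k1) != 0 by rewrite oppr_eq0 mulf_neq0.
have hvCd : v (- (e10 k * pi ^+ m * e11 k1)) = m%:Z.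
  by rewrite vN ?mulf_neq0 // (vM hCpm hd0) (vM hCk0 hpm) hvCk v_piX hvd add0r addr0.
have hDc : inP v (n%:Z + 1) (e11 k * e10 k1) by apply: inPM hD hc _; rewrite addrC.
have hlt : v (- (e10 k * pi ^+ m * e11 k1)) < n%:Z + 1 by rewrite hvCd ltzD1 lez_nat.
have [_ hvX] := vD_dominant hCd0 hDc hlt.
have hY : inP v 1 (e11 k * e00 k1 - e10 k * pi ^+ m * e01 k1).
  apply: inPB; first by apply: inPM hD (unit_inO ha) _; rewrite addr0.
  apply: inPM (inPM hCk (inP_piX m) _) hb _; rewrite ?add0r ?addr0 ?lez_nat //.
move=> _ hY0; rewrite inPE // in hY.
rewrite [_ - _ * _ * e11 k1]addrC hvX hvCd => hl.
by clear -hY hl; lia.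
Qed.

Lemma inK1_mx2_lower n c e : isUnitO v e -> inP v n%:Z c -> inK1 v n (mx2 1 0 c e).
Proof.
move=> he hc; rewrite /inK1 /inK det_mx2 !entry_mx2E subrr mul1r mul0r subr0.
split; [split|split] => //; try exact: inP0.
- exact: unit_inO unit1.
- exact: inP_le hc.
- exact: unit_inO.
Qed.

Lemma inK1_mx2_upper n b e : isUnitO v e -> inO v b -> inK1 v n (mx2 1 b 0 e).
Proof.
move=> he hb; rewrite /inK1 /inK det_mx2 !entry_mx2E subrr mul1r mulr0 subr0.
split; [split|split] => //; try exact: inP0.
- exact: unit_inO unit1.
- exact: unit_inO.
Qed.

(* Any M with e10 M = C != 0 equals (-C) n(e00 M / C) a(det M / C^2) w n(e11 M / C);
   each witness applies this to M = g k1^-1, with k1 in K1(p^n) chosen so that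
   det M / C^2 is a power of pi and e11 M / C has valuation -l. *)
Section CellWitnesses.
Variables (n : nat) (A B C D : F).
Hypothesis hdet : A * D - B * C != 0.

Lemma in_cell_generic (l : nat) : C != 0 -> D != 0 -> v C - v D = l%:Z ->
  exists t, in_cell v pi n t l (mx2 A B C D).
Proof.
move=> hC hD hl; pose X := (A * D - B * C) / C ^+ 2; pose e := unit_part X.
have hX : X != 0 by rewrite mulf_neq0 ?invr_eq0 ?expf_neq0.
have he : isUnitO v e := unit_part_unit hX.
have /andP [he0 /eqP hve] := he.
have hpl : pi ^+ l != 0 by rewrite expf_neq0 ?pi_neq0.
have heC : e * C != 0 by rewrite mulf_neq0.
exists (v X), (- C), (A / C), (pi ^+ l * (D / (e * C))), (mx2 1 0 0 e); split.
- by rewrite oppr_eq0.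
- rewrite isUnitOE ?mulf_neq0 ?invr_eq0 // vM ?mulf_neq0 ?invr_eq0 //.
  by rewrite vM ?invr_eq0 // vV // vM // v_piX hve; lia.
- exact: inK1_mx2_lower he (inP0 _).
- rewrite cell_mxE /e /unit_part -/X.
  move: (pi ^ v X) (piXz_neq0 (v X)) => y hy.
  by rewrite /X; congr mx2; field; rewrite ?hC ?hy ?hdet.
Qed.

Lemma in_cell_small : C != 0 -> (D = 0 \/ v C <= v D) ->
  exists t, in_cell v pi n t 0 (mx2 A B C D).
Proof.
move=> hC hCD; pose X := (A * D - B * C) / C ^+ 2; pose e := unit_part X.
have hX : X != 0 by rewrite mulf_neq0 ?invr_eq0 ?expf_neq0.
have he := unit_part_unit hX.
exists (v X), (- C), (A / C), 1, (mx2 1 (D / C - e) 0 e); split.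
- by rewrite oppr_eq0.
- exact: unit1.
- apply: inK1_mx2_upper => //; apply: inPB (unit_inO he).
  case: (eqVneq D 0) => [->|hD]; first by rewrite mul0r inP0.
  case: hCD => [/eqP|hle]; first by rewrite (negbTE hD).
  rewrite /inO inPE ?mulf_neq0 ?invr_eq0 // vM ?invr_eq0 // vV //.
  by move: hle; clear; lia.
- rewrite expr0 invr1 mulr1 cell_mxE /e /unit_part -/X.
  move: (pi ^ v X) (piXz_neq0 (v X)) => y hy.
  by rewrite /X; congr mx2; field; rewrite ?hC ?hy ?hdet.
Qed.

Lemma in_cell_big : D != 0 -> (C = 0 \/ n%:Z < v C - v D) ->
  exists t, in_cell v pi n t n (mx2 A B C D).
Proof.
move=> hD hCD; pose P := pi ^+ n.
have hP : P != 0 by rewrite expf_neq0 ?pi_neq0.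
pose X := (A * D - B * C) / (P ^+ 2 * D ^+ 2); pose e := (unit_part X)^-1.
have hX : X != 0 by rewrite mulf_neq0 // invr_eq0 mulf_neq0 // expf_neq0.
have he : isUnitO v e := unitV (unit_part_unit hX).
have he0 : e != 0 by case/andP: he.
pose c := e * C / D - P.
exists (v X), (- (D * P / e)), ((A * e - B * c) / (D * P)), 1, (mx2 1 0 c e); split.
- by rewrite oppr_eq0 !mulf_neq0 // invr_eq0.
- exact: unit1.
- apply: inK1_mx2_lower => //; apply: inPB (inP_piX n).
  case: (eqVneq C 0) => [->|hC]; first by rewrite mulr0 mul0r inP0.
  case: hCD => [/eqP|hlt]; first by rewrite (negbTE hC).
  have heC : e * C != 0 by rewrite mulf_neq0.
  have hvc : v (e * C / D) = v C - v D.
    by rewrite (vM heC (invr_neq0 hD)) (vV hD) (vM he0 hC); case/andP: he => _ /eqP ->; lia.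
  have hq : e * C / D != 0 by rewrite mulf_neq0 // invr_eq0.
  by rewrite (inPE _ hq) hvc; move: hlt; clear; lia.
- rewrite mulr1 cell_mxE /c /e /unit_part -/X.
  move: (pi ^ v X) (piXz_neq0 (v X)) => y hy.
  by rewrite /X /P; congr mx2; field; rewrite ?hD ?hy ?hdet ?expf_neq0 ?pi_neq0.
Qed.

End CellWitnesses.

Lemma has_l_exists n g : \det g != 0 -> exists l, has_l v pi n g l.
Proof.
rewrite (mx2_eta g) det_mx2; move: (e00 g) (e01 g) (e10 g) (e11 g) => A B C D hdet.
have of_cell l : (l <= n)%N -> (exists t, in_cell v pi n t l (mx2 A B C D)) ->
    exists l, has_l v pi n (mx2 A B C D) l.
  by move=> hl [t ht]; exists l; split=> //; exists t.
have [hC|hC] := eqVneq C 0.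
  have hD : D != 0 by apply: contraNneq hdet => ->; rewrite hC !mulr0 subrr.
  by apply: (of_cell n (leqnn n)); apply: in_cell_big => //; left.
have [hD|hD] := eqVneq D 0.
  by apply: (of_cell 0%N) => //; apply: in_cell_small => //; left.
have [hCD|hDC] := leP (v C) (v D).
  by apply: (of_cell 0%N) => //; apply: in_cell_small => //; right.
have [hn|hn] := leP (v C - v D) n%:Z; last first.
  by apply: (of_cell n (leqnn n)); apply: in_cell_big => //; right.
have hl : v C - v D = `|v C - v D|%N by rewrite gez0_abs // subr_ge0 ltW.
apply: (of_cell `|v C - v D|%N); first by rewrite -lez_nat -hl.
exact: in_cell_generic.
Qed.

End Valuation.

Theorem lemma2p1 (F : fieldType) (v : F -> int) (pi : F)
  (hF : nonarch_local_field_char0 v pi)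
  (n : nat) (hn : odd n) (k : 'M[F]_2) (hk : inK v k) :
  let n1 := uphalf n in
  let n0 := n./2 in
  let g := k *m amx (pi ^+ n1) in
  (exists l, has_l v pi n g l) /\
  (forall l : nat, has_l v pi n g l ->
     ((n1 <= l)%N <-> in_NoK0p v k) /\ ((l <= n0)%N <-> in_wK0p v k)).
Proof.
move=> n1 n0 g.
have hv : is_discrete_valuation v pi by case: hF.
have hn10 : n1 = n0.+1 by rewrite /n1 /n0 uphalf_half hn.
have hn1 : (0 < n1 <= n)%N.
  by have := odd_double_half n; rewrite hn10 hn -addnn /n0 /=; lia.
have hdet : \det g != 0.
  rewrite det_mulmx /amx det_mx2 mulr1 mul0r subr0 mulf_neq0 ?expf_neq0 ?(pi_neq0 hv) //.
  by case: hk => _ _ _ _ /andP [].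
split=> [|l [_ [t hcell]]]; first exact: has_l_exists.
rewrite (in_NoK0p_iff hv hk) (in_wK0p_iff hv hk) hn10.
have [_ _ _ hD _] := hk.
case/orP: (inO_unit_or_p hD) => [hu|hp].
- have := cell_level_ge hv hn1 hk hu hcell; rewrite hn10 => hl.
  by rewrite hl leqNgt hl hu (negbTE (unit_notin_p hu)).
- have := cell_level_lt hv hn1 hk hp hcell; rewrite hn10 ltnS => hl.
  rewrite hl hp ltnNge hl; split; split => //.
  by move/unit_notin_p; rewrite hp.
Qed.
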